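(* Fix an integer $\alpha\ge 1$. Then $$\lim_{n\to\infty}\frac{\lambda_{n,\alpha}}{n}=\frac{1}{\alpha}.$$
   Context: All graphs are finite and simple. For a graph $G$, $\lambda(G)$ denotes the spectral radius (largest eigenvalue) of its adjacency matrix, and $\alpha(G)$ denotes its independence number. For integers $n\ge \alpha\ge 1$, $\mathcal{G}_{n,\alpha}$ is the set of all connected graphs of order $n$ with independence number $\alpha$, and $\lambda_{n,\alpha}=\min\{\lambda(G): G\in\mathcal{G}_{n,\alpha}\}$. *)

(* Scalars: algC (archimedean, so the epsilon-N limit
   below is the usual real limit). *)
From HB Require Import structures.
From mathcomp Require Import all_boot all_order all_algebra all_field.
From Stdlib Require Import ClassicalEpsilon.
Set Implicit Arguments. Unset Strict Implicit. Unset Printing Implicit Defensive.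
Import Order.TTheory GRing.Theory Num.Theory.
Local Open Scope ring_scope.

Definition graph (n : nat) := {ffun 'I_n * 'I_n -> bool}.

Definition adj n (g : graph n) : rel 'I_n := fun x y => g (x, y).

Definition simple_graph n (g : graph n) : bool :=
  [forall x, ~~ adj g x x] && [forall x, forall y, adj g x y == adj g y x].

Definition connected_graph n (g : graph n) : bool :=
  [forall x, forall y, connect (adj g) x y].

Definition independent n (g : graph n) (S : {set 'I_n}) : bool :=
  [forall x in S, forall y in S, ~~ adj g x y].

Definition indep_num n (g : graph n) : nat :=
  \max_(S : {set 'I_n} | independent g S) #|S|.

Definition adj_mx n (g : graph n) : 'M[algC]_n :=
  \matrix_(i, j) ((adj g i j : nat)%:R).

Definition largest_eigenvalue n (A : 'M[algC]_n) : algC :=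
  epsilon (inhabits 0)
    (fun r => eigenvalue A r /\ forall a, eigenvalue A a -> a <= r).

Definition spec_rad n (g : graph n) : algC := largest_eigenvalue (adj_mx g).

Definition G_class (n a : nat) (g : graph n) : bool :=
  [&& simple_graph g, connected_graph g & indep_num g == a].

Definition lambda_min (n a : nat) : algC :=
  epsilon (inhabits 0)
    (fun r => (exists2 g : graph n, G_class a g & spec_rad g = r) /\
              forall g : graph n, G_class a g -> r <= spec_rad g).

Definition converges (u : nat -> algC) (l : algC) : Prop :=
  forall eps : algC, 0 < eps ->
    exists N : nat, forall n : nat, (N <= n)%N -> `|u n - l| < eps.

From HB Require Import structures.
From mathcomp Require Import all_boot all_order all_algebra all_field.
From mathcomp Require Import spectral sesquilinear zify ring.
From Stdlib Require Import ClassicalEpsilon.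
Import Order.TTheory GRing.Theory Num.Theory.
Set Implicit Arguments. Unset Strict Implicit. Unset Printing Implicit Defensive.
Local Open Scope ring_scope.

(* The limit lambda_{n,alpha} / n --> 1 / alpha follows from the two-sided
   estimate  n/alpha - 1 <= lambda_{n,alpha} <= n/alpha + 2  for n >= 2 alpha.

   A real symmetric matrix is unitarily diagonalisable
   (library theorem orthomx_spectralP), so its eigenvalues are real, a largest
   one exists, and the Rayleigh quotient is bounded by it; with the all-ones
   vector this gives  (sum of entries) <= lambda * n.  Independently, an
   eigenvalue of a nonnegative matrix is bounded in modulus by the largest
   column sum.

   For G in G_{n,alpha}, the all-ones Rayleigh quotient gives
   sum_x deg x <= lambda(G) n, and the greedy minimum-degree algorithm yields
   an independent set S with n^2 <= (sum_x deg x + n) |S|; as |S| <= alpha,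
   n^2 / alpha <= lambda(G) n + n.

   The graph on 0..n-1 in which residue classes mod alpha are
   cliques and 0 - 1 - ... - (alpha-1) is a path lies in G_{n,alpha} and has
   maximum degree at most n/alpha + 2, which bounds its spectral radius. *)

Lemma exists_max_real (I : finType) (f : I -> algC) (i0 : I) :
  (forall i, f i \is Num.real) -> exists i, forall j, f j <= f i.
Proof.
move=> fR.
suff [i _ max_i] : exists2 i, i \in i0 :: enum I &
    {in i0 :: enum I, forall j, f j <= f i}.
  by exists i => j; apply: max_i; rewrite inE mem_enum orbT.
elim: (enum I) => [|a s [i si max_i]].
  by exists i0 => [|j]; rewrite ?inE // => /eqP ->.
have in_s j : j \in i0 :: a :: s -> (j == a) || (j \in i0 :: s).
  by rewrite !inE; case: (j == a); rewrite ?orbT.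
have [le_ia|le_ai] := orP (real_leVge (fR i) (fR a)).
  exists a; first by rewrite !inE eqxx orbT.
  by move=> j /in_s /orP[/eqP -> //|/max_i le_ji]; apply: le_trans le_ia.
exists i; first by move: si; rewrite !inE => /orP[] ->; rewrite ?orbT.
by move=> j /in_s /orP[/eqP -> //|/max_i].
Qed.

Section RealSymmetricSpectrum.
Variables (n : nat) (A : 'M[algC]_n).
Hypothesis A_sym : A^T = A.
Hypothesis A_real : forall i j, A i j \is Num.real.

Let P := spectralmx A.
Let d := spectral_diag A.

Let PPt : P *m (P ^t* )%sesqui = 1%:M.
Proof. exact/unitarymxP/spectral_unitarymx. Qed.

Let PtP : (P ^t* )%sesqui *m P = 1%:M.
Proof. exact/mulmx1C/PPt. Qed.

Let A_realmx : A \is a mxOver Num.real.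
Proof. exact/mxOverP. Qed.

Let A_symmx : A \is symmetricmx.
Proof. by apply/is_hermitianmxP; rewrite expr0 scale1r map_mx_id. Qed.

Lemma spectral_decomposition : A = (P ^t* )%sesqui *m diag_mx d *m P.
Proof.
rewrite -invmx_unitary ?spectral_unitarymx //.
exact/orthomx_spectralP/symmetric_normalmx.
Qed.

Lemma spectral_diag_real i : d 0 i \is Num.real.
Proof.
have := hermitian_spectral_diag_real (realsym_hermsym A_symmx A_realmx).
by move/mxOverP; apply.
Qed.

Lemma spectral_diag_eigenvalue i : eigenvalue A (d 0 i).
Proof.
apply/eigenvalueP; exists (delta_mx 0 i *m P).
  rewrite {1}spectral_decomposition !mulmxA -(mulmxA _ P) PPt mulmx1.
  by rewrite -[delta_mx 0 i *m diag_mx d]rowE row_diag_mx scalemxAl.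
apply/negP => /eqP/(congr1 (mulmx^~ (P ^t* )%sesqui)).
rewrite mul0mx -mulmxA PPt mulmx1 => /matrixP /(_ 0 i); rewrite !mxE !eqxx /=.
by move/eqP; rewrite oner_eq0.
Qed.

Lemma eigenvalue_spectral_diag a : eigenvalue A a -> exists i, a = d 0 i.
Proof.
move/eigenvalueP => [v Av v_neq0].
set w := v *m (P ^t* )%sesqui.
have Dw : w *m diag_mx d = a *: w.
  have := congr1 (mulmx^~ (P ^t* )%sesqui) Av.
  by rewrite {1}spectral_decomposition !mulmxA -(mulmxA _ P) PPt mulmx1 -scalemxAl.
have [i wi_neq0] : exists i, w 0 i != 0.
  apply/existsP; apply: contraR v_neq0 => /existsPn w0; apply/eqP.
  have {}w0 : w = 0 by apply/rowP => j; rewrite [in RHS]mxE; apply/eqP; exact: negbNE (w0 j).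
  by rewrite -[v]mulmx1 -PtP mulmxA -/w w0 mul0mx.
exists i; have := congr1 (fun M : 'rV_n => M 0 i) Dw.
rewrite mul_mx_diag mxE [X in _ = X]mxE => /eqP.
by rewrite [a * _]mulrC -subr_eq0 -mulrBr mulf_eq0 (negbTE wi_neq0) subr_eq0 => /eqP.
Qed.

Lemma eigenvalue_real a : eigenvalue A a -> a \is Num.real.
Proof. by move=> /eigenvalue_spectral_diag [i ->]; exact: spectral_diag_real. Qed.

Lemma largest_eigenvalueP : (0 < n)%N ->
  eigenvalue A (largest_eigenvalue A) /\
  forall a, eigenvalue A a -> a <= largest_eigenvalue A.
Proof.
move=> n_gt0; apply: (epsilon_spec (inhabits 0) (fun r => eigenvalue A r /\ _)).
have [i max_i] := exists_max_real (Ordinal n_gt0) spectral_diag_real.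
exists (d 0 i); split; first exact: spectral_diag_eigenvalue.
by move=> a /eigenvalue_spectral_diag [j ->].
Qed.

Lemma rayleigh_le (r : algC) (u : 'rV[algC]_n) :
  (forall a, eigenvalue A a -> a <= r) ->
  (u *m A *m (u ^t* )%sesqui) 0 0 <= r * (u *m (u ^t* )%sesqui) 0 0.
Proof.
move=> r_max; set w := u *m (P ^t* )%sesqui.
have wt : (w ^t* )%sesqui = P *m (u ^t* )%sesqui.
  by rewrite /w trmx_mul map_mxM trmxCK.
have -> : u *m A *m (u ^t* )%sesqui = w *m diag_mx d *m (w ^t* )%sesqui.
  by rewrite wt {1}spectral_decomposition /w !mulmxA.
have -> : u *m (u ^t* )%sesqui = w *m (w ^t* )%sesqui.
  by rewrite wt /w mulmxA -(mulmxA u) PtP mulmx1.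
rewrite !mxE mulr_sumr; apply: ler_sum => i _.
rewrite mul_mx_diag !mxE mulrAC -normCK [r * _]mulrC.
by rewrite ler_wpM2l ?exprn_ge0 // r_max // spectral_diag_eigenvalue.
Qed.

(* The all-ones test vector: the sum of the entries is at most r n. *)
Lemma sum_entries_le (r : algC) : (forall a, eigenvalue A a -> a <= r) ->
  \sum_j \sum_i A i j <= r * n%:R.
Proof.
move=> /(rayleigh_le (const_mx 1)).
have -> : ((const_mx 1 : 'rV[algC]_n) ^t* )%sesqui = const_mx 1.
  by apply/matrixP => i j; rewrite !mxE conjC1.
congr (_ <= _); rewrite !mxE.
  by apply: eq_bigr => j _; rewrite !mxE mulr1; apply: eq_bigr => i _; rewrite mxE mul1r.
by rewrite (eq_bigr (fun=> 1)) ?sumr_const ?card_ord // => j _; rewrite !mxE mulr1.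
Qed.

End RealSymmetricSpectrum.

(* An eigenvalue of a nonnegative matrix is at most its largest column sum in
   modulus: compare both sides of (v A)_j = a v_j at a coordinate j where |v_j|
   is maximal. *)
Lemma eigenvalue_norm_le_colsum n (A : 'M[algC]_n) (D : algC) (a : algC) :
  (forall i j, 0 <= A i j) -> (forall j, \sum_i A i j <= D) ->
  eigenvalue A a -> `|a| <= D.
Proof.
move=> A_ge0 colsum /eigenvalueP [v Av v_neq0].
have [j0 vj0_neq0] : exists j, v 0 j != 0.
  apply/existsP; apply: contraR v_neq0 => /existsPn v0.
  by apply/eqP/rowP => j; rewrite [in RHS]mxE; apply/eqP; exact: negbNE (v0 j).
have [j max_j] := @exists_max_real _ (fun j => `|v 0 j|) j0 (fun j => normr_real _).
have vj_gt0 : 0 < `|v 0 j| by apply: lt_le_trans (max_j j0); rewrite normr_gt0.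
have := congr1 (fun M : 'rV_n => M 0 j) Av; rewrite /= !mxE => Avj.
rewrite -(ler_pM2r vj_gt0) -normrM -Avj.
apply: le_trans (ler_norm_sum _ _ _) _.
apply: (@le_trans _ _ (\sum_i A i j * `|v 0 j|)).
  apply: ler_sum => i _; rewrite normrM (ger0_norm (A_ge0 i j)) mulrC.
  by apply: ler_wpM2l; [exact: A_ge0 | exact: max_j].
by rewrite -mulr_suml ler_pM2r.
Qed.

Local Close Scope ring_scope.

(* The arithmetic of one greedy step: a vertex of minimum degree b - 1 is
   removed with its b - 1 neighbours, a vertices remain, of degree sum plus
   count s, and the recursion picks k of them.  The cross term 2ab is
   absorbed by s + b^2 k thanks to 2 (a) (bk) <= a^2 + (bk)^2. *)
Lemma greedy_step_arith (a b s k T : nat) :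
  a * a <= s * k -> s + b * b <= T -> (a + b) * (a + b) <= T * k.+1.
Proof.
move=> le_a le_s.
suff le_ab : 2 * a * b <= s + b * b * k by nia.
case: k le_a => [|k] le_a; first by have -> : a = 0 by nia.
have [cauchy_ab _] := nat_Cauchy a (b * k.+1).
suff : 2 * a * b * k.+1 <= (s + b * b * k.+1) * k.+1 by rewrite leq_pmul2r.
nia.
Qed.

Section GreedyIndependentSet.
Variables (T : finType) (e : rel T).
Hypothesis e_irr : irreflexive e.
Hypothesis e_sym : symmetric e.

Definition rel_independent (S : {set T}) : bool :=
  [forall x in S, forall y in S, ~~ e x y].

Definition degree_in (X : {set T}) (x : T) : nat := #|[set y in X | e x y]|.

Lemma degree_in_mono (X Y : {set T}) x :
  Y \subset X -> degree_in Y x <= degree_in X x.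
Proof.
move=> sYX; apply: subset_leq_card; apply/subsetP => y.
by rewrite !inE => /andP[/(subsetP sYX) -> ->].
Qed.

Lemma rel_independentU1 v (S : {set T}) :
  rel_independent S -> {in S, forall y, ~~ e v y} -> rel_independent (v |: S).
Proof.
move=> indS vS; apply/forallP => x; apply/implyP => /setU1P xS.
apply/forallP => y; apply/implyP => /setU1P yS.
case: xS yS => [-> [-> | yS] | xS [-> | yS]].
- by rewrite e_irr.
- exact: vS yS.
- by rewrite e_sym vS.
- by move/forallP/(_ x)/implyP/(_ xS)/forallP/(_ y)/implyP/(_ yS): indS.
Qed.

(* Greedy minimum-degree algorithm: an independent subset S of X with
   |X|^2 <= (sum of the degrees inside X + |X|) |S|. *)
Lemma greedy_independent_set (X : {set T}) : exists S : {set T},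
  [/\ S \subset X, rel_independent S &
      #|X| * #|X| <= (\sum_(x in X) degree_in X x + #|X|) * #|S|].
Proof.
have [m] := ubnP #|X|; elim: m X => [//|m IH] X le_Xm.
have [-> | [v0 v0X]] := set_0Vmem X.
  exists set0; split; rewrite ?sub0set ?cards0 //.
  by apply/forallP => x; rewrite inE.
case: (arg_minnP (degree_in X) v0X) => {v0 v0X} v vX v_min.
set d := degree_in X v.
set N := v |: [set y in X | e v y].
set Y := X :\: N.
have NX : N \subset X.
  by apply/subsetP => y; rewrite !inE => /orP[/eqP -> | /andP[]].
have card_N : #|N| = d.+1 by rewrite cardsU1 !inE e_irr andbF.
have card_X : #|X| = #|Y| + d.+1.
  by rewrite cardsD (setIidPr NX) card_N subnK // -card_N subset_leq_card.
have [|S [SY indS le_Y]] := IH Y; first by rewrite card_X in le_Xm; lia.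
have vS : v \notin S by apply: contraT => /negPn /(subsetP SY); rewrite !inE eqxx.
exists (v |: S); split.
- by rewrite subUset sub1set (subset_trans SY (subsetDl X N)) andbT.
- apply: rel_independentU1 => // y /(subsetP SY).
  rewrite !inE negb_or => /andP[/andP[_ not_adj] yX].
  by apply: contra not_adj => ->; rewrite yX.
rewrite cardsU1 vS add1n card_X; apply: greedy_step_arith le_Y _.
rewrite [\sum_(x in X) _](big_setID N) /= (setIidPr NX) -/Y.
have le_Ysum : \sum_(x in Y) degree_in Y x <= \sum_(x in Y) degree_in X x.
  by apply: leq_sum => x _; apply: degree_in_mono; apply: subsetDl.
have le_Nsum : d.+1 * d <= \sum_(x in N) degree_in X x.
  rewrite -card_N -sum_nat_const; apply: leq_sum => x xN.
  exact: v_min (subsetP NX _ xN).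
lia.
Qed.

End GreedyIndependentSet.

Local Open Scope ring_scope.

Section SimpleGraphSpectrum.
Variables (n : nat) (g : graph n).
Hypothesis g_simple : simple_graph g.

Lemma adj_irr : irreflexive (adj g).
Proof. by move=> x; apply/negbTE; case/andP: g_simple => /forallP. Qed.

Lemma adj_sym : symmetric (adj g).
Proof. by move=> x y; case/andP: g_simple => _ /forallP /(_ x) /forallP /(_ y) /eqP. Qed.

Definition deg (x : 'I_n) : nat := degree_in (adj g) setT x.

Lemma adj_mx_sym : (adj_mx g)^T = adj_mx g.
Proof. by apply/matrixP => i j; rewrite !mxE adj_sym. Qed.

Lemma adj_mx_real i j : adj_mx g i j \is Num.real.
Proof. by rewrite mxE realn. Qed.

Lemma adj_mx_ge0 i j : 0 <= adj_mx g i j.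
Proof. by rewrite mxE ler0n. Qed.

Lemma adj_mx_colsum x : \sum_i adj_mx g i x = (deg x)%:R.
Proof.
rewrite /deg /degree_in -sum1_card natr_sum [RHS]big_mkcond /=.
by apply: eq_bigr => i _; rewrite mxE adj_sym !inE; case: adj.
Qed.

Lemma spec_radP : (0 < n)%N ->
  eigenvalue (adj_mx g) (spec_rad g) /\
  forall a, eigenvalue (adj_mx g) a -> a <= spec_rad g.
Proof. exact: largest_eigenvalueP adj_mx_sym adj_mx_real. Qed.

Lemma spec_rad_real : (0 < n)%N -> spec_rad g \is Num.real.
Proof.
by move=> /spec_radP [eig_r _]; exact: eigenvalue_real adj_mx_sym adj_mx_real _ eig_r.
Qed.

Lemma spec_rad_le_max_deg (D : nat) : (0 < n)%N ->
  (forall x, (deg x <= D)%N) -> spec_rad g <= D%:R.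
Proof.
move=> n_gt0 le_D; have [eig_r _] := spec_radP n_gt0.
apply: le_trans (real_ler_norm (spec_rad_real n_gt0)) _.
apply: eigenvalue_norm_le_colsum eig_r => [|j]; first exact: adj_mx_ge0.
by rewrite adj_mx_colsum ler_nat.
Qed.

Lemma sum_deg_le_spec_rad : (0 < n)%N ->
  (\sum_x deg x)%:R <= spec_rad g * n%:R.
Proof.
move=> /spec_radP [_ r_max].
rewrite natr_sum (eq_bigr _ (fun x _ => esym (adj_mx_colsum x))).
exact: sum_entries_le adj_mx_sym adj_mx_real _ r_max.
Qed.

End SimpleGraphSpectrum.

Lemma spec_rad_ge n a (g : graph n) : (0 < n)%N -> (0 < a)%N -> G_class a g ->
  n%:R / a%:R - 1 <= spec_rad g.
Proof.
move=> n_gt0 a_gt0 /and3P[g_simple _ /eqP indep_g].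
have [S [_ indS le_S]] :=
  greedy_independent_set (adj_irr g_simple) (adj_sym g_simple) setT.
have card_S : (#|S| <= a)%N by rewrite -indep_g; exact: leq_bigmax_cond.
have sum_deg : (\sum_(x in [set: 'I_n]) degree_in (adj g) setT x = \sum_x deg g x)%N.
  by apply: eq_bigl => x; rewrite in_setT.
rewrite sum_deg cardsT card_ord in le_S.
have le_nn : n%:R * n%:R <= ((\sum_x deg g x)%:R + n%:R) * a%:R :> algC.
  by rewrite -natrM -natrD -natrM ler_nat (leq_trans le_S) // leq_mul2l card_S orbT.
have n_gt0R : 0 < n%:R :> algC by rewrite ltr0n.
rewrite -(ler_pM2r n_gt0R) mulrBl mul1r lerBlDr mulrAC ler_pdivrMr ?ltr0n //.
by apply: le_trans le_nn _; rewrite ler_wpM2r ?lerD2r ?sum_deg_le_spec_rad.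
Qed.

Local Close Scope ring_scope.

Lemma card_residue_class n a r : 0 < a ->
  #|[set y : 'I_n | y %% a == r]| <= n %/ a + 1.
Proof.
move=> a_gt0.
have quo_lt (y : 'I_n) : y %/ a < (n %/ a).+1 by rewrite ltnS leq_div2r // ltnW.
rewrite -(card_in_imset (f := fun y => Ordinal (quo_lt y))).
  by apply: leq_trans (max_card _) _; rewrite card_ord addn1.
move=> y z; rewrite !inE => /eqP yr /eqP zr [] /= eq_quo.
by apply/val_inj; rewrite /= (divn_eq y a) (divn_eq z a) eq_quo yr zr.
Qed.

Lemma card_val_eq n k : #|[set y : 'I_n | val y == k]| <= 1.
Proof. by apply/card_le1_eqP => y z; rewrite !inE => /eqP <- /eqP /val_inj. Qed.

Section ResidueCliques.
Variables (a n : nat).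
Hypothesis a_gt0 : 0 < a.

Definition rc_adj (x y : 'I_n) : bool :=
  (x != y) &&
  ((x %% a == y %% a) || [&& x < a, y < a & (x.+1 == y) || (y.+1 == x)]).

Definition residue_cliques : graph n := [ffun p => rc_adj p.1 p.2].

Lemma adj_rcE x y : adj residue_cliques x y = rc_adj x y.
Proof. by rewrite /adj ffunE. Qed.

Lemma rc_adj_sym : symmetric rc_adj.
Proof.
move=> x y; rewrite /rc_adj [y == x]eq_sym [y %% a == _]eq_sym.
by rewrite [(y.+1 == x) || _]orbC; case: (x < a); case: (y < a).
Qed.

Lemma rc_simple : simple_graph residue_cliques.
Proof.
apply/andP; split; apply/forallP => x; first by rewrite adj_rcE /rc_adj eqxx.
by apply/forallP => y; rewrite !adj_rcE rc_adj_sym.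
Qed.

(* Neighbours of x: its residue class, and x + 1, x - 1. *)
Lemma rc_deg x : deg residue_cliques x <= n %/ a + 2.
Proof.
rewrite /deg /degree_in.
set C := [set y : 'I_n | y %% a == x %% a].
have sub : [set y in setT | adj residue_cliques x y] \subset
    (C :\ x) :|: ([set y : 'I_n | val y == x.+1] :|: [set y : 'I_n | val y == x.-1]).
  apply/subsetP => y; rewrite !inE /= adj_rcE /rc_adj.
  case/andP => ne /orP[e | /and3P[_ _ /orP[e | e]]].
  - by rewrite eq_sym ne eq_sym e.
  - by apply/orP; right; apply/orP; left; rewrite eq_sym.
  - by rewrite -(eqP e) /= eqxx !orbT.
apply: leq_trans (subset_leq_card sub) (leq_trans (leq_card_setU _ _) _).
have card_C : #|C :\ x| <= n %/ a.
  have := card_residue_class n (x %% a) a_gt0; rewrite -/C (cardsD1 x C) !inE eqxx.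
  by rewrite add1n addn1 ltnS.
have [card_pm _] := leq_card_setU [set y : 'I_n | val y == x.+1] [set y : 'I_n | val y == x.-1].
have := card_val_eq n x.+1; have := card_val_eq n x.-1.
lia.
Qed.

Hypothesis le_2a_n : a.*2 <= n.

Lemma ltn_a_n : a < n.
Proof. by move: le_2a_n; rewrite -addnn; lia. Qed.

(* Each vertex is joined to its residue, and the residues 0..a-1 form a path. *)
Lemma rc_connected : connected_graph residue_cliques.
Proof.
have symH : connect_sym (adj residue_cliques).
  by apply: sym_connect_sym => x y; rewrite !adj_rcE rc_adj_sym.
pose o0 : 'I_n := Ordinal (leq_ltn_trans (leq0n a) ltn_a_n).
have from0 r : r < a -> forall y : 'I_n, val y = r -> connect (adj residue_cliques) o0 y.
  elim: r => [|r IH] r_lt y yr; first by have -> : y = o0 by apply: val_inj.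
  have r_lt_n : r < n by apply: ltn_trans ltn_a_n; apply: ltnW.
  apply: connect_trans (IH (ltnW r_lt) (Ordinal r_lt_n) erefl) (connect1 _).
  rewrite adj_rcE /rc_adj /= yr (ltnW r_lt) r_lt eqxx /= orbT andbT.
  by rewrite -(inj_eq val_inj) /= yr neq_ltn ltnSn.
have to_residue (x : 'I_n) : exists2 y : 'I_n, val y < a & connect (adj residue_cliques) x y.
  have lt_n : x %% a < n by apply: ltn_trans ltn_a_n; apply: ltn_pmod.
  exists (Ordinal lt_n); first exact: ltn_pmod.
  have [<- | ne] := eqVneq x (Ordinal lt_n); first exact: connect0.
  by apply: connect1; rewrite adj_rcE /rc_adj ne /= modn_mod eqxx.
apply/forallP => x; apply/forallP => y.
have [x' x'_lt cx] := to_residue x; have [y' y'_lt cy] := to_residue y.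
rewrite symH in cy; apply: connect_trans cx (connect_trans _ cy).
apply: (connect_trans (y := o0)); last exact: from0 y'_lt y' erefl.
by rewrite symH; exact: from0 x'_lt x' erefl.
Qed.

(* An independent set meets each residue class at most once, and
   {a, ..., 2a-1} is independent. *)
Lemma rc_indep_num : indep_num residue_cliques = a.
Proof.
apply/eqP; rewrite eqn_leq; apply/andP; split.
  apply/bigmax_leqP => S indS.
  rewrite -(card_in_imset (f := fun x : 'I_n => Ordinal (ltn_pmod x a_gt0))).
    by apply: leq_trans (max_card _) _; rewrite card_ord.
  move=> x y xS yS [] /= eq_res; apply/eqP; apply: contraT => ne.
  move/forallP/(_ x)/implyP/(_ xS)/forallP/(_ y)/implyP/(_ yS): indS.
  by rewrite adj_rcE /rc_adj ne eq_res eqxx.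
have shift_lt (i : 'I_a) : i + a < n.
  by have := ltn_ord i; move: le_2a_n; rewrite -addnn; lia.
pose shift (i : 'I_a) : 'I_n := Ordinal (shift_lt i).
have shift_inj : injective shift.
  by move=> i j [] /eqP; rewrite eqn_add2r => /eqP /val_inj.
have ind_shift : independent residue_cliques (shift @: setT).
  apply/forallP => x; apply/implyP => /imsetP[i _ ->].
  apply/forallP => y; apply/implyP => /imsetP[j _ ->].
  rewrite adj_rcE /rc_adj /= !modnDr !modn_small // ltnNge leq_addl /= orbF.
  apply/negP => /andP[ne /eqP e]; move: ne.
  by rewrite -(inj_eq val_inj) /= e eqxx.
apply: leq_trans (leq_bigmax_cond _ ind_shift).
by rewrite card_imset // cardsT card_ord.
Qed.

Lemma rc_class : G_class a residue_cliques.
Proof. by rewrite /G_class rc_simple rc_connected rc_indep_num eqxx. Qed.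

End ResidueCliques.

Local Open Scope ring_scope.

Lemma lambda_minP n a : (0 < n)%N -> (exists g : graph n, G_class a g) ->
  (exists2 g : graph n, G_class a g & spec_rad g = lambda_min n a) /\
  forall g : graph n, G_class a g -> lambda_min n a <= spec_rad g.
Proof.
move=> n_gt0 [g0 g0_class]; rewrite /lambda_min.
pose GC := {g : graph n | G_class a g}.
have negR (s : GC) : - spec_rad (val s) \is Num.real.
  by rewrite rpredN; case/and3P: (valP s) => g_simple _ _; exact: spec_rad_real.
have [s s_min] := exists_max_real (exist _ g0 g0_class) negR.
case: (epsilon_spec (inhabits 0) (fun r =>
  (exists2 g : graph n, G_class a g & spec_rad g = r) /\
  forall g : graph n, G_class a g -> r <= spec_rad g)) => [|[g g_class <-] g_min].
  exists (spec_rad (val s)); split; first by exists (val s) => //; exact: valP.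
  by move=> g g_class; have := s_min (exist _ g g_class); rewrite lerN2.
by split; [exists g | ].
Qed.

Lemma lambda_min_bounds a n : (0 < a)%N -> (a.*2 <= n)%N ->
  n%:R / a%:R - 1 <= lambda_min n a <= n%:R / a%:R + 2.
Proof.
move=> a_gt0 le_2a_n.
have n_gt0 : (0 < n)%N by apply: leq_trans le_2a_n; rewrite -addnn ltn_addr.
have rc := rc_class a_gt0 le_2a_n.
have [[g g_class <-] g_min] := lambda_minP n_gt0 (ex_intro _ (residue_cliques a n) rc).
rewrite spec_rad_ge //=; apply: le_trans (g_min _ rc) _.
apply: le_trans (spec_rad_le_max_deg (@rc_simple a n) n_gt0 (rc_deg a_gt0)) _.
rewrite natrD lerD2r ler_pdivlMr ?ltr0n // -natrM ler_nat.
exact: leq_divM.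
Qed.

Lemma converges_of_dist_le (u : nat -> algC) (l C : algC) (N0 : nat) :
  0 <= C -> (forall n, (N0 <= n)%N -> `|u n - l| <= C / n%:R) -> converges u l.
Proof.
move=> C_ge0 near_l eps eps_gt0.
pose K := Num.Def.archi_bound (C / eps).
have lt_K : C / eps < K%:R := archi_boundP (divr_ge0 C_ge0 (ltW eps_gt0)).
exists (maxn N0 K.+1) => m; rewrite geq_max => /andP[le_N0 lt_Km].
have m_gt0 : 0 < m%:R :> algC by rewrite ltr0n (leq_trans _ lt_Km).
apply: le_lt_trans (near_l m le_N0) _.
rewrite ltr_pdivrMr // mulrC -ltr_pdivrMr //.
by apply: lt_le_trans lt_K _; rewrite ler_nat ltnW.
Qed.

Theorem theorem1p1 (alpha : nat) (halpha : (1 <= alpha)%N) :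
  converges (fun n => lambda_min n alpha / n%:R) (alpha%:R)^-1.
Proof.
apply: (@converges_of_dist_le _ _ 2 alpha.*2) => // n le_2a_n.
have n_gt0 : 0 < n%:R :> algC.
  by rewrite ltr0n (leq_trans _ le_2a_n) // -addnn ltn_addr.
have alpha_gt0 : 0 < alpha%:R :> algC by rewrite ltr0n.
have /andP[lb ub] := lambda_min_bounds halpha le_2a_n.
have -> : lambda_min n alpha / n%:R - alpha%:R^-1 =
          (lambda_min n alpha - n%:R / alpha%:R) / n%:R.
  by field; rewrite ?gt_eqF.
rewrite normrM normfV (gtr0_norm n_gt0); apply: ler_wpM2r; first by rewrite invr_ge0 ltW.
have lam_real : lambda_min n alpha \is Num.real.
  by rewrite (ger_real lb) rpredB ?rpredM ?rpredV ?realn ?rpred1.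
rewrite real_ler_distl ?rpredB ?rpredM ?rpredV ?realn // ub andbT.
by apply: le_trans lb; rewrite lerD2l lerN2 ler1n.
Qed.
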